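(* Let $\mathsf{G}$ be a strict monoidal category, let $\mathsf{X}$ be a small category, let $T:\mathsf{G}\to\mathsf{End}(\mathsf{X})$ be a strict monoidal functor, and let $\mathrm{W}$ be a monoidal weight on $\mathsf{G}$. Then the $\mathsf{G}$-interleaving distance $d_{T,\mathrm{W}}$ is an extended pseudometric on the object set $\mathsf{X}_0$; that is, $d_{T,\mathrm{W}}(X,X)=0$, $d_{T,\mathrm{W}}(X,Y)=d_{T,\mathrm{W}}(Y,X)$ and $d_{T,\mathrm{W}}(X,Z)\le d_{T,\mathrm{W}}(X,Y)+d_{T,\mathrm{W}}(Y,Z)$ for all $X,Y,Z\in\mathsf{X}_0$.
   Context: $\mathsf{G}$ is a strict monoidal category with tensor product written as juxtaposition $gh=g\otimes h$ on objects and unit object $e$. $\mathsf{End}(\mathsf{X})$ is the strict monoidal category whose objects are functors $\mathsf{X}\to\mathsf{X}$, whose morphisms are natural transformations, with tensor product given by composition of functors and horizontal composition $\bullet$ of natural transformations, and unit the identity functor $1_{\mathsf{X}}$. A strict monoidal functor $T$ satisfies $T(e)=1_{\mathsf X}$, $T_{gh}=T_gT_h$ (writing $T_g=T(g)$), and $T(\beta\otimes\alpha)=T(\beta)\bullet T(\alpha)$. A monoidal weight on $\mathsf{G}$ is a function $\mathrm{W}:\mathsf{G}_0\to\mathbb{R}\cup\{\infty\}$ with $\mathrm{W}(g)\ge 0$ for all $g$, $\mathrm{W}(e)=0$, and $\mathrm{W}(gf)\le \mathrm{W}(g)+\mathrm{W}(f)$ for all objects $f,g$. For $X,Y\in\mathsf{X}_0$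 and $g,h\in\mathsf{G}_0$, $X$ and $Y$ are $(g,h)$-interleaved if there exist morphisms $\phi:X\to T_g(Y)$ and $\psi:Y\to T_h(X)$ in $\mathsf{X}$ and morphisms $\alpha:e\to gh$, $\beta:e\to hg$ in $\mathsf{G}$ such that $T_g(\psi)\circ\phi=T(\alpha)_X$ and $T_h(\phi)\circ\psi=T(\beta)_Y$. The $\mathsf{G}$-interleaving distance is $d_{T,\mathrm{W}}(X,Y)=\inf\{\max\{\mathrm{W}(g),\mathrm{W}(h)\}: X,Y \text{ are } (g,h)\text{-interleaved}\}$, with $\inf\emptyset=\infty$. An extended pseudometric is a function to $[0,\infty]$ satisfying the three listed properties. *)

From HB Require Import structures.
From mathcomp Require Import all_boot all_order all_algebra.
From mathcomp Require Import boolp classical_sets reals constructive_ereal ereal.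

Set Implicit Arguments.
Unset Strict Implicit.
Unset Printing Implicit Defensive.
Set Universe Polymorphism.

Import Order.TTheory GRing.Theory Num.Theory.

(** Categories (morphism equality is Leibniz equality). *)
Record Category := {
  Ob :> Type;
  Hom : Ob -> Ob -> Type;
  idm : forall a, Hom a a;
  comp : forall a b c, Hom b c -> Hom a b -> Hom a c;
  comp_idl : forall a b (f : Hom a b), comp (idm b) f = f;
  comp_idr : forall a b (f : Hom a b), comp f (idm a) = f;
  comp_assoc : forall a b c d (f : Hom a b) (g : Hom b c) (h : Hom c d),
      comp h (comp g f) = comp (comp h g) f
}.
Arguments Hom {_} _ _.
Arguments idm {_} _.
Arguments comp {_ _ _ _} _ _.

(** Equality of morphisms whose (co)domains are equal objects
    (heterogeneous equality of packed morphisms). *)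
Definition hom_eq (C : Category) (a b a' b' : C) (f : Hom a b) (f' : Hom a' b')
  : Prop :=
  existT (fun p : C * C => Hom p.1 p.2) (a, b) f =
  existT (fun p : C * C => Hom p.1 p.2) (a', b') f'.

Record StrictMonoidalCategory := {
  smc_cat :> Category;
  tens : smc_cat -> smc_cat -> smc_cat;
  munit : smc_cat;
  tensm : forall a b c d, Hom a b -> Hom c d -> Hom (tens a c) (tens b d);
  tensm_id : forall a c, tensm (idm a) (idm c) = idm (tens a c);
  tensm_comp : forall a b b' c d d' (f : Hom a b) (f' : Hom b b')
      (g : Hom c d) (g' : Hom d d'),
      tensm (comp f' f) (comp g' g) = comp (tensm f' g') (tensm f g);
  tens_assoc : forall a b c, tens (tens a b) c = tens a (tens b c);
  tens_unitl : forall a, tens munit a = a;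
  tens_unitr : forall a, tens a munit = a;
  tensm_assoc : forall a a' b b' c c' (f : Hom a a') (g : Hom b b') (h : Hom c c'),
      hom_eq (tensm (tensm f g) h) (tensm f (tensm g h));
  tensm_unitl : forall a b (f : Hom a b), hom_eq (tensm (idm munit) f) f;
  tensm_unitr : forall a b (f : Hom a b), hom_eq (tensm f (idm munit)) f
}.
Arguments tens {s}.
Arguments munit {s}.
Arguments tensm {s a b c d}.

Record Endofunctor (X : Category) := {
  fob :> X -> X;
  fhom : forall a b, Hom a b -> Hom (fob a) (fob b);
  fhom_id : forall a, fhom (idm a) = idm (fob a);
  fhom_comp : forall a b c (f : Hom a b) (g : Hom b c),
      fhom (comp g f) = comp (fhom g) (fhom f)
}.
Arguments fhom {X} e {a b}.

(** T sends each object g to an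
    endofunctor T_g and each morphism a : g -> h to a natural transformation
    T(a) : T_g => T_h (given by its components).  Strictness: T(e) = 1_X,
    T_(gh) = T_g T_h (as functors), and T(b (x) a) = T(b) • T(a), where the
    horizontal composite has components (T(b) • T(a))_x = T_g'(T(a)_x) o T(b)_(T_h x). *)
Record StrictMonoidalFunctor (G : StrictMonoidalCategory) (X : Category) := {
  Tob : G -> Endofunctor X;
  Tnat : forall g h : G, Hom g h -> forall x : X, Hom (Tob g x) (Tob h x);
  Tnat_natural : forall (g h : G) (a : Hom g h) (x y : X) (f : Hom x y),
      comp (fhom (Tob h) f) (Tnat a x) = comp (Tnat a y) (fhom (Tob g) f);
  Tnat_id : forall (g : G) (x : X), Tnat (idm g) x = idm (Tob g x);
  Tnat_comp : forall (g h k : G) (a : Hom g h) (b : Hom h k) (x : X),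
      Tnat (comp b a) x = comp (Tnat b x) (Tnat a x);
  T_unit_ob : forall x : X, Tob munit x = x;
  T_unit_hom : forall (x y : X) (f : Hom x y), hom_eq (fhom (Tob munit) f) f;
  T_tens_ob : forall (g h : G) (x : X), Tob (tens g h) x = Tob g (Tob h x);
  T_tens_hom : forall (g h : G) (x y : X) (f : Hom x y),
      hom_eq (fhom (Tob (tens g h)) f) (fhom (Tob g) (fhom (Tob h) f));
  T_tensm : forall (g g' h h' : G) (b : Hom g g') (a : Hom h h') (x : X),
      hom_eq (Tnat (tensm b a) x)
             (comp (fhom (Tob g') (Tnat a x)) (Tnat b (Tob h x)))
}.
Arguments Tob {G X} s.
Arguments Tnat {G X} s {g h}.

Local Open Scope ereal_scope.

Definition monoidal_weight (R : realType) (G : StrictMonoidalCategory)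
  (W : G -> \bar R) : Prop :=
  (forall g, 0 <= W g) /\ W munit = 0 /\
  (forall g f, W (tens g f) <= W g + W f).

Definition interleaved (G : StrictMonoidalCategory) (X : Category)
  (T : StrictMonoidalFunctor G X) (x y : X) (g h : G) : Prop :=
  exists (phi : Hom x (Tob T g y)) (psi : Hom y (Tob T h x))
         (al : Hom munit (tens g h)) (be : Hom munit (tens h g)),
    hom_eq (comp (fhom (Tob T g) psi) phi) (Tnat T al x) /\
    hom_eq (comp (fhom (Tob T h) phi) psi) (Tnat T be y).

(** The G-interleaving distance (inf of the empty set is +oo). *)
Definition interleaving_dist (R : realType) (G : StrictMonoidalCategory)
  (X : Category) (T : StrictMonoidalFunctor G X) (W : G -> \bar R) (x y : X)
  : \bar R :=
  ereal_inf [set r : \bar R | exists g h : G,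
     interleaved T x y g h /\ r = maxe (W g) (W h)].

From Pilot Require Import Defs.
From HB Require Import structures.
From mathcomp Require Import all_boot all_order all_algebra.
From mathcomp Require Import boolp classical_sets reals constructive_ereal ereal.
From Stdlib Require Import Eqdep.
(* [all_algebra] exports [vector.Hom]; re-importing [Defs] gives back the categorical [Hom]. *)
Import Pilot.Defs.

(** Interleavings compose: a (g,h)-interleaving of X and Y and a (g',h')-interleaving
    of Y and Z give a (gg',h'h)-interleaving of X and Z, whose unit is
    (g ⊗ α' ⊗ h) ∘ α; the triangle identity for it follows from naturality of T(α')
    and the triangle identity for α.  Together with the identity (e,e)-interleaving
    and the symmetry (g,h) ↦ (h,g), subadditivity of W turns this into the
    pseudometric axioms after passing to infima. *)

Set Implicit Arguments.
Unset Strict Implicit.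
Unset Printing Implicit Defensive.

Import Order.TTheory GRing.Theory Num.Theory.

Section HomEq.
Variable C : Category.

Lemma hom_eq_sym (a b a' b' : C) (f : Hom a b) (f' : Hom a' b') :
  hom_eq f f' -> hom_eq f' f.
Proof. by rewrite /hom_eq => ->. Qed.

Lemma hom_eq_trans (a b a' b' a'' b'' : C)
    (f : Hom a b) (f' : Hom a' b') (f'' : Hom a'' b'') :
  hom_eq f f' -> hom_eq f' f'' -> hom_eq f f''.
Proof. by rewrite /hom_eq => ->. Qed.

Lemma hom_eq_ends (a b a' b' : C) (f : Hom a b) (f' : Hom a' b') :
  hom_eq f f' -> a = a' /\ b = b'.
Proof. by move=> /(f_equal (@projT1 _ _)) [-> ->]. Qed.

Lemma hom_eqP (a b : C) (f f' : Hom a b) : hom_eq f f' <-> f = f'.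
Proof. by split=> [ff'|->]; first exact: inj_pair2 ff'. Qed.

Lemma hom_eq_transport (a b a' b' : C) (f : Hom a b) :
  a = a' -> b = b' -> exists f' : Hom a' b', hom_eq f' f.
Proof. by case: _ /; case: _ /; exists f. Qed.

Lemma hom_eq_idm (a a' : C) : a = a' -> hom_eq (idm a) (idm a').
Proof. by move=> ->. Qed.

Lemma hom_eq_comp (a b c a' b' c' : C) (f : Hom a b) (g : Hom b c)
    (f' : Hom a' b') (g' : Hom b' c') :
  hom_eq f f' -> hom_eq g g' -> hom_eq (comp g f) (comp g' f').
Proof.
move=> ff' gg'; have [ea eb] := hom_eq_ends ff'; have [_ ec] := hom_eq_ends gg'.
by subst a' b' c'; move: ff' gg' => /hom_eqP -> /hom_eqP ->.
Qed.

End HomEq.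

Lemma hom_eq_fhom (X : Category) (F : Endofunctor X) (a b a' b' : X)
    (f : Hom a b) (f' : Hom a' b') :
  hom_eq f f' -> hom_eq (fhom F f) (fhom F f').
Proof.
by move=> ff'; have [ea eb] := hom_eq_ends ff'; subst a' b'; move/hom_eqP: ff' ->.
Qed.

Section Interleaving.
Variables (G : StrictMonoidalCategory) (X : Category) (T : StrictMonoidalFunctor G X).

Lemma hom_eq_Tnat (g h g' h' : G) (a : Hom g h) (a' : Hom g' h') (x : X) :
  hom_eq a a' -> hom_eq (Tnat T a x) (Tnat T a' x).
Proof.
by move=> aa'; have [eg eh] := hom_eq_ends aa'; subst g' h'; move/hom_eqP: aa' ->.
Qed.

Lemma Tnat_tensm_idl (g k k' : G) (a : Hom k k') (x : X) :
  hom_eq (Tnat T (tensm (idm g) a) x) (fhom (Tob T g) (Tnat T a x)).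
Proof. by apply: hom_eq_trans (T_tensm T _ _ x) _; rewrite Tnat_id comp_idr. Qed.

Lemma Tnat_tensm_idr (h k k' : G) (a : Hom k k') (x : X) :
  hom_eq (Tnat T (tensm a (idm h)) x) (Tnat T a (Tob T h x)).
Proof.
by apply: hom_eq_trans (T_tensm T _ _ x) _; rewrite Tnat_id fhom_id comp_idl.
Qed.

Lemma interleaving_triangle_comp (g h g' h' : G) (x y z : X)
    (phi : Hom x (Tob T g y)) (psi : Hom y (Tob T h x)) (al : Hom munit (tens g h))
    (phi' : Hom y (Tob T g' z)) (psi' : Hom z (Tob T h' y))
    (al' : Hom munit (tens g' h'))
    (phi'' : Hom x (Tob T (tens g g') z)) (psi'' : Hom z (Tob T (tens h' h) x))
    (w : Hom (tens g h) (tens (tens g g') (tens h' h)))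
    (al'' : Hom munit (tens (tens g g') (tens h' h))) :
  hom_eq (comp (fhom (Tob T g) psi) phi) (Tnat T al x) ->
  hom_eq (comp (fhom (Tob T g') psi') phi') (Tnat T al' y) ->
  hom_eq phi'' (comp (fhom (Tob T g) phi') phi) ->
  hom_eq psi'' (comp (fhom (Tob T h') psi) psi') ->
  hom_eq w (tensm (idm g) (tensm al' (idm h))) ->
  hom_eq al'' (comp w al) ->
  hom_eq (comp (fhom (Tob T (tens g g')) psi'') phi'') (Tnat T al'' x).
Proof.
move=> tri tri' e_phi e_psi e_w e_al.
have naturality_step : hom_eq
    (comp (fhom (Tob T g') (fhom (Tob T h') psi)) (comp (fhom (Tob T g') psi') phi'))
    (comp (Tnat T al' (Tob T h x)) (fhom (Tob T munit) psi)).
  apply: hom_eq_trans (hom_eq_comp tri' (hom_eq_sym (T_tens_hom T g' h' psi))) _.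
  by rewrite Tnat_natural.
(* [T_e] is the identity only up to [T_unit_ob], so [phi] must be retyped
   before it can be followed by [T_g (T_e psi)]. *)
have [phi_e e_phi_e] : exists phi_e : Hom x (Tob T g (Tob T munit y)), hom_eq phi_e phi.
  by apply: hom_eq_transport; rewrite ?T_unit_ob.
have triangle_step : hom_eq (comp (fhom (Tob T g) (fhom (Tob T munit) psi)) phi_e) (Tnat T al x).
  exact: hom_eq_trans (hom_eq_comp e_phi_e (hom_eq_fhom _ (T_unit_hom T psi))) tri.
have e_al'' : hom_eq (Tnat T al'' x) (comp (fhom (Tob T g) (Tnat T al' (Tob T h x)))
    (comp (fhom (Tob T g) (fhom (Tob T munit) psi)) phi_e)).
  apply: hom_eq_trans (hom_eq_Tnat x e_al) _; rewrite Tnat_comp.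
  apply: hom_eq_comp (hom_eq_sym triangle_step) _.
  apply: hom_eq_trans (hom_eq_Tnat x e_w) _.
  apply: hom_eq_trans (Tnat_tensm_idl _ _ _) _.
  exact/hom_eq_fhom/Tnat_tensm_idr.
have e_T_psi'' : hom_eq (fhom (Tob T (tens g g')) psi'')
    (fhom (Tob T g) (fhom (Tob T g') (comp (fhom (Tob T h') psi) psi'))).
  exact: hom_eq_trans (hom_eq_fhom _ e_psi) (T_tens_hom T g g' _).
apply: hom_eq_trans (hom_eq_comp e_phi e_T_psi'') _.
have -> : comp (fhom (Tob T g) (fhom (Tob T g') (comp (fhom (Tob T h') psi) psi')))
      (comp (fhom (Tob T g) phi') phi)
    = comp (fhom (Tob T g) (comp (fhom (Tob T g') (fhom (Tob T h') psi))
      (comp (fhom (Tob T g') psi') phi'))) phi.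
  by rewrite !fhom_comp !comp_assoc.
apply: hom_eq_trans (hom_eq_comp (hom_eq_sym e_phi_e) (hom_eq_fhom _ naturality_step)) _.
by rewrite fhom_comp -comp_assoc; exact: hom_eq_sym e_al''.
Qed.

Lemma interleaved_refl (x : X) : interleaved T x x munit munit.
Proof.
have [phi e_phi] : exists phi : Hom x (Tob T munit x), hom_eq phi (idm x).
  by apply: hom_eq_transport; rewrite ?T_unit_ob.
have [al e_al] : exists al : Hom munit (tens munit munit), hom_eq al (idm (munit : G)).
  by apply: hom_eq_transport; rewrite ?tens_unitl.
have tri : hom_eq (comp (fhom (Tob T munit) phi) phi) (Tnat T al x).
  apply: hom_eq_trans _ (hom_eq_sym (hom_eq_Tnat x e_al)); rewrite Tnat_id.
  have e_T_phi := hom_eq_trans (T_unit_hom T phi) e_phi.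
  apply: hom_eq_trans (hom_eq_comp e_phi e_T_phi) _.
  by rewrite comp_idl; apply: hom_eq_idm; rewrite T_unit_ob.
by exists phi, phi, al, al.
Qed.

Lemma interleaved_sym (x y : X) (g h : G) :
  interleaved T x y g h -> interleaved T y x h g.
Proof. by move=> [phi [psi [al [be [tri_x tri_y]]]]]; exists psi, phi, be, al. Qed.

Lemma interleaved_comp (x y z : X) (g h g' h' : G) :
  interleaved T x y g h -> interleaved T y z g' h' ->
  interleaved T x z (tens g g') (tens h' h).
Proof.
move=> [phi [psi [al [be [tri_x tri_y]]]]] [phi' [psi' [al' [be' [tri_y' tri_z]]]]].
have [phi'' e_phi''] : exists phi'' : Hom x (Tob T (tens g g') z),
    hom_eq phi'' (comp (fhom (Tob T g) phi') phi).
  by apply: hom_eq_transport; rewrite ?T_tens_ob.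
have [psi'' e_psi''] : exists psi'' : Hom z (Tob T (tens h' h) x),
    hom_eq psi'' (comp (fhom (Tob T h') psi) psi').
  by apply: hom_eq_transport; rewrite ?T_tens_ob.
have [w e_w] : exists w : Hom (tens g h) (tens (tens g g') (tens h' h)),
    hom_eq w (tensm (idm g) (tensm al' (idm h))).
  by apply: hom_eq_transport; rewrite ?tens_unitl ?tens_assoc.
have [w' e_w'] : exists w' : Hom (tens h' g') (tens (tens h' h) (tens g g')),
    hom_eq w' (tensm (idm h') (tensm be (idm g'))).
  by apply: hom_eq_transport; rewrite ?tens_unitl ?tens_assoc.
exists phi'', psi'', (comp w al), (comp w' be'); split.
- exact: interleaving_triangle_comp tri_x tri_y' e_phi'' e_psi'' e_w _.
- exact: interleaving_triangle_comp tri_z tri_y e_psi'' e_phi'' e_w' _.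
Qed.

End Interleaving.

Local Open Scope ereal_scope.

Lemma ereal_inf_leD (R : realType) (A B C : set (\bar R)) :
  -oo < ereal_inf A -> -oo < ereal_inf B ->
  (forall a b, A a -> B b -> ereal_inf C <= a + b) ->
  ereal_inf C <= ereal_inf A + ereal_inf B.
Proof.
move=> A_gtNy B_gtNy C_leD.
have [->|A_ltey] := eqVneq (ereal_inf A) +oo; first by rewrite addye ?gt_eqF ?leey.
have [->|B_ltey] := eqVneq (ereal_inf B) +oo; first by rewrite addey ?gt_eqF ?leey.
have A_fin : ereal_inf A \is a fin_num by rewrite fin_numE gt_eqF.
have B_fin : ereal_inf B \is a fin_num by rewrite fin_numE gt_eqF.
apply/lee_addgt0Pr => e e_gt0; have e2_gt0 : (0 < e / 2)%R by rewrite divr_gt0.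
have [a Aa a_lt] := lb_ereal_inf_adherent e2_gt0 A_fin.
have [b Bb b_lt] := lb_ereal_inf_adherent e2_gt0 B_fin.
apply: le_trans (C_leD a b Aa Bb) _; apply: le_trans (leeD (ltW a_lt) (ltW b_lt)) _.
rewrite -(fineK A_fin) -(fineK B_fin) -!EFinD lee_fin.
by rewrite [X in (_ <= _ + X)%R]splitr addrACA.
Qed.

Section InterleavingDistance.
Variables (R : realType) (G : StrictMonoidalCategory) (X : Category).
Variables (T : StrictMonoidalFunctor G X) (W : G -> \bar R).
Hypothesis W_ge0 : forall g, 0 <= W g.

Lemma interleaving_dist_ge0 (x y : X) : 0 <= interleaving_dist T W x y.
Proof. by apply: le_ereal_inf_tmp => _ [g [h [_ ->]]]; rewrite le_max W_ge0. Qed.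

Lemma interleaving_dist_xx (x : X) :
  W munit = 0 -> interleaving_dist T W x x = 0.
Proof.
move=> W_unit; apply/eqP; rewrite eq_le interleaving_dist_ge0 andbT.
apply: ereal_inf_lbound; exists munit, munit; split; first exact: interleaved_refl.
by rewrite W_unit maxxx.
Qed.

Lemma interleaving_dist_sym (x y : X) :
  interleaving_dist T W x y = interleaving_dist T W y x.
Proof.
suff le_sym u v : interleaving_dist T W u v <= interleaving_dist T W v u.
  by apply/eqP; rewrite eq_le !le_sym.
apply: le_ereal_inf_tmp => _ [g [h [uv ->]]].
by apply: ereal_inf_lbound; exists h, g; rewrite maxC; split; first exact: interleaved_sym.
Qed.

Lemma interleaving_dist_triangle (x y z : X) :
  (forall g f, W (tens g f) <= W g + W f) ->
  interleaving_dist T W x z <= interleaving_dist T W x y + interleaving_dist T W y z.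
Proof.
move=> W_tens; apply: ereal_inf_leD.
- exact: lt_le_trans ltNy0 (interleaving_dist_ge0 _ _).
- exact: lt_le_trans ltNy0 (interleaving_dist_ge0 _ _).
move=> _ _ [g [h [xy ->]]] [g' [h' [yz ->]]].
apply: le_trans (ereal_inf_lbound _) _.
  by exists (tens g g'), (tens h' h); split; first exact: interleaved_comp xy yz.
rewrite ge_max; apply/andP; split; apply: le_trans (W_tens _ _) _.
  by apply: leeD; rewrite le_max lexx.
by rewrite addeC; apply: leeD; rewrite le_max lexx ?orbT.
Qed.

End InterleavingDistance.

Theorem theorem3p8 (R : realType) (G : StrictMonoidalCategory) (X : Category)
  (T : StrictMonoidalFunctor G X) (W : G -> \bar R) :
  monoidal_weight W ->
  (forall x y : X, 0 <= interleaving_dist T W x y) /\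
  (forall x : X, interleaving_dist T W x x = 0) /\
  (forall x y : X, interleaving_dist T W x y = interleaving_dist T W y x) /\
  (forall x y z : X,
     interleaving_dist T W x z <= interleaving_dist T W x y + interleaving_dist T W y z).
Proof.
move=> [W_ge0 [W_unit W_tens]]; split; first exact: interleaving_dist_ge0.
split; first by move=> x; exact: interleaving_dist_xx.
split; first exact: interleaving_dist_sym.
by move=> x y z; exact: interleaving_dist_triangle.
Qed.
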